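(* Let $(\mathcal{C},\mathbb{E},\mathfrak{s})$ be an extriangulated category. Then $\mathfrak{s}\textup{-tri}(\mathcal{C})/\mathcal{R}_2$ is an abelian category.
   Context: An extriangulated category $(\mathcal{C},\mathbb{E},\mathfrak{s})$ (Nakaoka–Palu) is an additive category with an additive bifunctor $\mathbb{E}:\mathcal{C}^{\mathrm{op}}\times\mathcal{C}\to Ab$ and a realization $\mathfrak{s}$ assigning to each $\delta\in\mathbb{E}(C,A)$ an equivalence class of sequences $A\to B\to C$, giving $\mathfrak{s}$-triangles $A\to B\to C\overset{\delta}{\dashrightarrow}$, satisfying axioms (ET1)–(ET4)$^{\mathrm{op}}$. $\mathfrak{s}\textup{-tri}(\mathcal{C})$ has as objects the $\mathfrak{s}$-triangles $X_\bullet=(X_1\xrightarrow{f_1}X_2\xrightarrow{f_2}X_3\overset{\delta}{\dashrightarrow})$ and as morphisms $X_\bullet\to Y_\bullet=(Y_1\xrightarrow{g_1}Y_2\xrightarrow{g_2}Y_3\overset{\delta'}{\dashrightarrow})$ the triples $(\varphi_1,\varphi_2,\varphi_3)$ with $\varphi_2f_1=g_1\varphi_1$, $\varphi_3f_2=g_2\varphi_2$ and $\mathbb{E}(X_3,\varphi_1)(\delta)=\mathbb{E}(\varphi_3,Y_1)(\delta')$. $\mathcal{R}_2$ is the ideal of morphisms $\varphi_\bullet$ such that $\varphi_3$ factors through $g_2$. *)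

From HB Require Import structures.
From mathcomp Require Import all_boot all_algebra.
Set Implicit Arguments. Unset Strict Implicit. Unset Printing Implicit Defensive.
Import GRing.Theory.
Local Open Scope ring_scope.

(* comp g f = g o f.  The laws are stated separately (is_preadditive).       *)
Record preadd := PreAdd {
  obj : Type;
  hom : obj -> obj -> zmodType;
  idm : forall A, hom A A;
  comp : forall A B C, hom B C -> hom A B -> hom A C }.
Arguments hom {p}.
Arguments idm {p} A.
Arguments comp {p A B C}.

Section Additive.
Variable C : preadd.

Definition is_iso (A B : obj C) (f : hom A B) :=
  exists g : hom B A, comp g f = idm A /\ comp f g = idm B.

Definition is_zero_object (Z : obj C) :=
  forall A : obj C, (forall f g : hom A Z, f = g) /\ (forall f g : hom Z A, f = g).

Definition is_biproduct (A1 A2 S : obj C) (i1 : hom A1 S) (i2 : hom A2 S)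
    (p1 : hom S A1) (p2 : hom S A2) :=
  [/\ comp p1 i1 = idm A1, comp p2 i2 = idm A2, comp p1 i2 = 0, comp p2 i1 = 0
    & comp i1 p1 + comp i2 p2 = idm S].

Definition is_preadditive :=
  [/\ (forall (A B D F : obj C) (h : hom D F) (g : hom B D) (f : hom A B),
         comp h (comp g f) = comp (comp h g) f),
      (forall (A B : obj C) (f : hom A B), comp (idm B) f = f),
      (forall (A B : obj C) (f : hom A B), comp f (idm A) = f),
      (forall (A B D : obj C) (g1 g2 : hom B D) (f : hom A B),
         comp (g1 + g2) f = comp g1 f + comp g2 f)
    & (forall (A B D : obj C) (g : hom B D) (f1 f2 : hom A B),
         comp g (f1 + f2) = comp g f1 + comp g f2)].

Definition is_additive :=
  [/\ is_preadditive,
      exists Z, is_zero_object Z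
    & forall A1 A2 : obj C, exists (S : obj C) (i1 : hom A1 S) (i2 : hom A2 S)
        (p1 : hom S A1) (p2 : hom S A2), is_biproduct i1 i2 p1 p2].
End Additive.

(* Ext X A = E(X, A);  Emap c a = E(c, a) : E(X, A) -> E(X', A')             *)
(*   for c : X' -> X and a : A -> A'.                                        *)
(* realizes d B x y  <->  the sequence A -x-> B -y-> X belongs to the        *)
(*   equivalence class s(d), for d in E(X, A).                               *)
Record ext_data (C : preadd) := ExtData {
  Ext : obj C -> obj C -> zmodType;
  Emap : forall X X' A A' : obj C, hom X' X -> hom A A' -> Ext X A -> Ext X' A';
  realizes : forall (A X : obj C), Ext X A -> forall B : obj C, hom A B -> hom B X -> Prop }.
Arguments Ext {C} e.
Arguments Emap {C} e {X X' A A'}.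
Arguments realizes {C} e {A X} _ B.

Section Extriangulated.
Variables (C : preadd) (E : ext_data C).

Definition push (X A A' : obj C) (a : hom A A') (d : Ext E X A) : Ext E X A' :=
  Emap E (idm X) a d.
Definition pull (X X' A : obj C) (c : hom X' X) (d : Ext E X A) : Ext E X' A :=
  Emap E c (idm A) d.

Definition E_additive_bifunctor :=
  [/\ (forall (X A : obj C) (d : Ext E X A), Emap E (idm X) (idm A) d = d),
      (forall (X X' X'' A A' A'' : obj C) (c : hom X' X) (c' : hom X'' X')
          (a : hom A A') (a' : hom A' A'') (d : Ext E X A),
         Emap E (comp c c') (comp a' a) d = Emap E c' a' (Emap E c a d)),
      (forall (X X' A A' : obj C) (c : hom X' X) (a : hom A A') (d1 d2 : Ext E X A),
         Emap E c a (d1 + d2) = Emap E c a d1 + Emap E c a d2),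
      (forall (X X' A : obj C) (c1 c2 : hom X' X) (d : Ext E X A),
         pull (c1 + c2) d = pull c1 d + pull c2 d)
    & (forall (X A A' : obj C) (a1 a2 : hom A A') (d : Ext E X A),
         push (a1 + a2) d = push a1 d + push a2 d)].

Definition seq_equiv (A X B B' : obj C) (x : hom A B) (y : hom B X)
    (x' : hom A B') (y' : hom B' X) :=
  exists b : hom B B', [/\ is_iso b, comp b x = x' & comp y' b = y].

Definition realization_is_class :=
  forall (A X : obj C) (d : Ext E X A),
    (exists (B : obj C) (x : hom A B) (y : hom B X), realizes E d B x y) /\
    (forall (B B' : obj C) (x : hom A B) (y : hom B X) (x' : hom A B') (y' : hom B' X),
       realizes E d B x y -> (realizes E d B' x' y' <-> seq_equiv x y x' y')).

Definition realization_condition :=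
  forall (A X A' X' B B' : obj C) (d : Ext E X A) (d' : Ext E X' A')
    (x : hom A B) (y : hom B X) (x' : hom A' B') (y' : hom B' X')
    (a : hom A A') (c : hom X X'),
    realizes E d B x y -> realizes E d' B' x' y' -> push a d = pull c d' ->
    exists b : hom B B', comp b x = comp x' a /\ comp y' b = comp c y.

Definition additive_realization :=
  (forall (A X S : obj C) (iA : hom A S) (iX : hom X S) (pA : hom S A) (pX : hom S X),
     is_biproduct iA iX pA pX -> realizes E (0 : Ext E X A) S iA pX) /\
  (forall (A X A' X' B B' SA SB SX : obj C) (d : Ext E X A) (d' : Ext E X' A')
     (x : hom A B) (y : hom B X) (x' : hom A' B') (y' : hom B' X')
     (iA : hom A SA) (iA' : hom A' SA) (pA : hom SA A) (pA' : hom SA A')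
     (iB : hom B SB) (iB' : hom B' SB) (pB : hom SB B) (pB' : hom SB B')
     (iX : hom X SX) (iX' : hom X' SX) (pX : hom SX X) (pX' : hom SX X'),
     realizes E d B x y -> realizes E d' B' x' y' ->
     is_biproduct iA iA' pA pA' -> is_biproduct iB iB' pB pB' ->
     is_biproduct iX iX' pX pX' ->
     realizes E (push iA (pull pX d) + push iA' (pull pX' d')) SB
       (comp iB (comp x pA) + comp iB' (comp x' pA'))
       (comp iX (comp y pB) + comp iX' (comp y' pB'))).

Definition ET3 :=
  forall (A X A' X' B B' : obj C) (d : Ext E X A) (d' : Ext E X' A')
    (x : hom A B) (y : hom B X) (x' : hom A' B') (y' : hom B' X')
    (a : hom A A') (b : hom B B'),
    realizes E d B x y -> realizes E d' B' x' y' -> comp b x = comp x' a ->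
    exists c : hom X X', comp c y = comp y' b /\ push a d = pull c d'.

Definition ET3op :=
  forall (A X A' X' B B' : obj C) (d : Ext E X A) (d' : Ext E X' A')
    (x : hom A B) (y : hom B X) (x' : hom A' B') (y' : hom B' X')
    (b : hom B B') (c : hom X X'),
    realizes E d B x y -> realizes E d' B' x' y' -> comp y' b = comp c y ->
    exists a : hom A A', comp x' a = comp b x /\ push a d = pull c d'.

Definition ET4 :=
  forall (A B D F Cc : obj C) (d : Ext E D A) (d' : Ext E F B)
    (f : hom A B) (f' : hom B D) (g : hom B Cc) (g' : hom Cc F),
    realizes E d B f f' -> realizes E d' Cc g g' ->
    exists (Eo : obj C) (h : hom A Cc) (h' : hom Cc Eo) (dd : hom D Eo)
      (e : hom Eo F) (d'' : Ext E Eo A),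
      [/\ comp g f = h, comp h' g = comp dd f', comp e h' = g',
          realizes E d'' Cc h h'
        & [/\ realizes E (push f' d') Eo dd e, pull dd d'' = d
            & push f d'' = pull e d']].

Definition ET4op :=
  forall (D A B F Cc : obj C) (d : Ext E B D) (d' : Ext E Cc F)
    (f' : hom D A) (f : hom A B) (g' : hom F B) (g : hom B Cc),
    realizes E d A f' f -> realizes E d' B g' g ->
    exists (Eo : obj C) (dd : hom D Eo) (e : hom Eo F) (h' : hom Eo A)
      (h : hom A Cc) (d'' : Ext E Cc Eo),
      [/\ comp h' dd = f', comp f h' = comp g' e, comp g f = h,
          realizes E d'' A h' h
        & [/\ realizes E (pull g' d) Eo dd e, push e d'' = d'
            & push dd d = pull g d'']].

Definition extriangulated :=
  [/\ is_additive C, E_additive_bifunctor,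
      realization_is_class /\ realization_condition /\ additive_realization,
      ET3 /\ ET3op
    & ET4 /\ ET4op].

Record stri := STri {
  s1 : obj C; s2 : obj C; s3 : obj C;
  sf1 : hom s1 s2; sf2 : hom s2 s3;
  sdel : Ext E s3 s1;
  sreal : realizes E sdel s2 sf1 sf2 }.

(* raw triples of morphisms *)
Record strihom (X Y : stri) := SHom {
  m1 : hom (s1 X) (s1 Y); m2 : hom (s2 X) (s2 Y); m3 : hom (s3 X) (s3 Y) }.

Definition is_strimor (X Y : stri) (p : strihom X Y) :=
  [/\ comp (m2 p) (sf1 X) = comp (sf1 Y) (m1 p),
      comp (m3 p) (sf2 X) = comp (sf2 Y) (m2 p)
    & push (m1 p) (sdel X) = pull (m3 p) (sdel Y)].

Definition in_R2 (X Y : stri) (p : strihom X Y) :=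
  exists t : hom (s3 X) (s2 Y), m3 p = comp (sf2 Y) t.

Definition stri_id (X : stri) : strihom X X := @SHom X X (idm _) (idm _) (idm _).
Definition stri_comp (X Y Z : stri) (q : strihom Y Z) (p : strihom X Y) : strihom X Z :=
  @SHom X Z (comp (m1 q) (m1 p)) (comp (m2 q) (m2 p)) (comp (m3 q) (m3 p)).
Definition stri_add (X Y : stri) (p q : strihom X Y) : strihom X Y :=
  @SHom X Y (m1 p + m1 q) (m2 p + m2 q) (m3 p + m3 q).
Definition stri_zero (X Y : stri) : strihom X Y := @SHom X Y 0 0 0.
Definition stri_opp (X Y : stri) (p : strihom X Y) : strihom X Y :=
  @SHom X Y (- m1 p) (- m2 p) (- m3 p).
Definition stri_eqR2 (X Y : stri) (p q : strihom X Y) :=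
  in_R2 (stri_add p (stri_opp q)).
End Extriangulated.

(* A category presented by generators: Hom(A,B) is the set of raw arrows f   *)
(* with pmem f, taken modulo the relation peq.  Identity, composition and    *)
(* the additive structure are induced by the raw operations.                 *)
Record precat := PreCat {
  pobj : Type;
  phom : pobj -> pobj -> Type;
  pmem : forall A B, phom A B -> Prop;
  peq : forall A B, phom A B -> phom A B -> Prop;
  pid : forall A, phom A A;
  pcomp : forall A B C, phom B C -> phom A B -> phom A C;
  padd : forall A B, phom A B -> phom A B -> phom A B;
  pzero : forall A B, phom A B;
  popp : forall A B, phom A B -> phom A B }.
Arguments phom {p}.
Arguments pmem {p A B}.
Arguments peq {p A B}.
Arguments pid {p} A.
Arguments pcomp {p A B C}.
Arguments padd {p A B}.
Arguments pzero {p} A B.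
Arguments popp {p A B}.

Section Abelian.
Variable K : precat.

Definition pwell_formed :=
  [/\ [/\ (forall (A B : pobj K) (f : phom A B), peq f f),
          (forall (A B : pobj K) (f g : phom A B), peq f g -> peq g f)
        & (forall (A B : pobj K) (f g h : phom A B), peq f g -> peq g h -> peq f h)],
      [/\ (forall A : pobj K, pmem (pid A)),
          (forall (A B D : pobj K) (g : phom B D) (f : phom A B),
             pmem g -> pmem f -> pmem (pcomp g f)),
          (forall (A B : pobj K) (f g : phom A B), pmem f -> pmem g -> pmem (padd f g)),
          (forall A B : pobj K, pmem (pzero A B))
        & (forall (A B : pobj K) (f : phom A B), pmem f -> pmem (popp f))],
      [/\ (forall (A B D : pobj K) (g g' : phom B D) (f f' : phom A B),
             pmem g -> pmem g' -> pmem f -> pmem f' -> peq g g' -> peq f f' ->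
             peq (pcomp g f) (pcomp g' f')),
          (forall (A B : pobj K) (f f' g g' : phom A B),
             pmem f -> pmem f' -> pmem g -> pmem g' -> peq f f' -> peq g g' ->
             peq (padd f g) (padd f' g'))
        & (forall (A B : pobj K) (f f' : phom A B),
             pmem f -> pmem f' -> peq f f' -> peq (popp f) (popp f'))],
      [/\ (forall (A B D F : pobj K) (h : phom D F) (g : phom B D) (f : phom A B),
             pmem h -> pmem g -> pmem f -> peq (pcomp h (pcomp g f)) (pcomp (pcomp h g) f)),
          (forall (A B : pobj K) (f : phom A B), pmem f -> peq (pcomp (pid B) f) f)
        & (forall (A B : pobj K) (f : phom A B), pmem f -> peq (pcomp f (pid A)) f)]
    &
      [/\ (forall (A B : pobj K) (f g h : phom A B), pmem f -> pmem g -> pmem h ->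
             peq (padd f (padd g h)) (padd (padd f g) h)),
          (forall (A B : pobj K) (f g : phom A B), pmem f -> pmem g ->
             peq (padd f g) (padd g f)),
          (forall (A B : pobj K) (f : phom A B), pmem f -> peq (padd (pzero A B) f) f),
          (forall (A B : pobj K) (f : phom A B), pmem f ->
             peq (padd (popp f) f) (pzero A B))
        & [/\ (forall (A B D : pobj K) (g1 g2 : phom B D) (f : phom A B),
                 pmem g1 -> pmem g2 -> pmem f ->
                 peq (pcomp (padd g1 g2) f) (padd (pcomp g1 f) (pcomp g2 f)))
            & (forall (A B D : pobj K) (g : phom B D) (f1 f2 : phom A B),
                 pmem g -> pmem f1 -> pmem f2 ->
                 peq (pcomp g (padd f1 f2)) (padd (pcomp g f1) (pcomp g f2)))]]].

Definition pzero_object (Z : pobj K) :=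
  forall A : pobj K,
    (forall f g : phom A Z, pmem f -> pmem g -> peq f g) /\
    (forall f g : phom Z A, pmem f -> pmem g -> peq f g).

Definition pbiproduct (A1 A2 S : pobj K) (i1 : phom A1 S) (i2 : phom A2 S)
    (p1 : phom S A1) (p2 : phom S A2) :=
  [/\ pmem i1 /\ pmem i2 /\ pmem p1 /\ pmem p2,
      peq (pcomp p1 i1) (pid A1) /\ peq (pcomp p2 i2) (pid A2),
      peq (pcomp p1 i2) (pzero A2 A1), peq (pcomp p2 i1) (pzero A1 A2)
    & peq (padd (pcomp i1 p1) (pcomp i2 p2)) (pid S)].

Definition pkernel (A B K0 : pobj K) (f : phom A B) (k : phom K0 A) :=
  [/\ pmem k, peq (pcomp f k) (pzero K0 B)
    & forall (X : pobj K) (g : phom X A), pmem g -> peq (pcomp f g) (pzero X B) ->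
        exists u : phom X K0, [/\ pmem u, peq (pcomp k u) g
          & forall u' : phom X K0, pmem u' -> peq (pcomp k u') g -> peq u' u]].

Definition pcokernel (A B Q : pobj K) (f : phom A B) (q : phom B Q) :=
  [/\ pmem q, peq (pcomp q f) (pzero A Q)
    & forall (X : pobj K) (g : phom B X), pmem g -> peq (pcomp g f) (pzero A X) ->
        exists u : phom Q X, [/\ pmem u, peq (pcomp u q) g
          & forall u' : phom Q X, pmem u' -> peq (pcomp u' q) g -> peq u' u]].

Definition pmono (A B : pobj K) (m : phom A B) :=
  forall (X : pobj K) (g h : phom X A), pmem g -> pmem h ->
    peq (pcomp m g) (pcomp m h) -> peq g h.

Definition pepi (A B : pobj K) (e : phom A B) :=
  forall (X : pobj K) (g h : phom B X), pmem g -> pmem h ->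
    peq (pcomp g e) (pcomp h e) -> peq g h.

Definition is_abelian :=
  [/\ pwell_formed,
      exists Z, pzero_object Z,
      [/\ (forall A1 A2 : pobj K, exists (S : pobj K) (i1 : phom A1 S) (i2 : phom A2 S)
         (p1 : phom S A1) (p2 : phom S A2), pbiproduct i1 i2 p1 p2),
      (forall (A B : pobj K) (f : phom A B), pmem f ->
         exists (K0 : pobj K) (k : phom K0 A), pkernel f k)
       & (forall (A B : pobj K) (f : phom A B), pmem f ->
         exists (Q : pobj K) (q : phom B Q), pcokernel f q)],
      (forall (A B : pobj K) (m : phom A B), pmem m -> pmono m ->
         exists (Q : pobj K) (f : phom B Q), pmem f /\ pkernel f m)
    & (forall (A B : pobj K) (e : phom A B), pmem e -> pepi e ->
         exists (P : pobj K) (f : phom P A), pmem f /\ pcokernel f e)].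
End Abelian.

Definition stri_quot (C : preadd) (E : ext_data C) : precat :=
  @PreCat (stri E) (@strihom C E) (@is_strimor C E) (@stri_eqR2 C E)
    (@stri_id C E) (@stri_comp C E) (@stri_add C E) (@stri_zero C E) (@stri_opp C E).

(** The class of a morphism [phi : X -> Y] of s-triangles modulo [R_2] is
    determined by the single element [phi3^* delta_Y = (phi1)_* delta_X] of
    [E(X3, Y1)]: by the exact sequence [C(X3, Y2) -> C(X3, Y3) -> E(X3, Y1)],
    [phi3] factors through [g2] exactly when [phi3^* delta_Y = 0].  Given [f],
    realize [f3^* delta_Y] as [Y1 -e-> M -p-> X3].  A kernel of [f] is an
    s-triangle realizing [p^* delta_X] together with the morphism [(1, _, p)];
    a cokernel is an s-triangle realizing [e_* delta_Y] with [(e, _, 1)].  The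
    long exact sequences relating [C] and [E] give their universal properties,
    and, when [f] is a monomorphism (resp. an epimorphism), they show that [f]
    is the kernel of its cokernel (resp. the cokernel of its kernel).  Only the
    axioms (ET1)-(ET3)^op are needed. *)
From mathcomp Require Import all_boot all_algebra.
Set Implicit Arguments. Unset Strict Implicit. Unset Printing Implicit Defensive.
Import GRing.Theory.
Local Open Scope ring_scope.

Section Preadditive.
Variable C : preadd.
Hypothesis HC : is_preadditive C.

Lemma compA (A B D F : obj C) (h : hom D F) (g : hom B D) (f : hom A B) :
  comp h (comp g f) = comp (comp h g) f.
Proof. by case: HC => H _ _ _ _; apply: H. Qed.

Lemma comp1l (A B : obj C) (f : hom A B) : comp (idm B) f = f.
Proof. by case: HC => _ H _ _ _; apply: H. Qed.

Lemma comp1r (A B : obj C) (f : hom A B) : comp f (idm A) = f.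
Proof. by case: HC => _ _ H _ _; apply: H. Qed.

Lemma compDl (A B D : obj C) (g1 g2 : hom B D) (f : hom A B) :
  comp (g1 + g2) f = comp g1 f + comp g2 f.
Proof. by case: HC => _ _ _ H _; apply: H. Qed.

Lemma compDr (A B D : obj C) (g : hom B D) (f1 f2 : hom A B) :
  comp g (f1 + f2) = comp g f1 + comp g f2.
Proof. by case: HC => _ _ _ _ H; apply: H. Qed.

Lemma comp0l (A B D : obj C) (f : hom A B) : comp (0 : hom B D) f = 0.
Proof. by apply/(addrI (comp 0 f)); rewrite -compDl !addr0. Qed.

Lemma comp0r (A B D : obj C) (g : hom B D) : comp g (0 : hom A B) = 0.
Proof. by apply/(addrI (comp g 0)); rewrite -compDr !addr0. Qed.

Lemma compNl (A B D : obj C) (g : hom B D) (f : hom A B) :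
  comp (- g) f = - comp g f.
Proof. by apply/(addrI (comp g f)); rewrite -compDl !subrr comp0l. Qed.

Lemma compNr (A B D : obj C) (g : hom B D) (f : hom A B) :
  comp g (- f) = - comp g f.
Proof. by apply/(addrI (comp g f)); rewrite -compDr !subrr comp0r. Qed.

Lemma biproduct_zero_l (Z : obj C) (B : obj C) : is_zero_object Z ->
  is_biproduct (0 : hom Z B) (idm B) 0 (idm B).
Proof.
move=> HZ; split; rewrite ?comp1l ?comp0l ?comp0r ?add0r //.
by case: (HZ Z) => _; apply.
Qed.

Lemma biproduct_zero_r (Z : obj C) (B : obj C) : is_zero_object Z ->
  is_biproduct (idm B) (0 : hom Z B) (idm B) 0.
Proof.
move=> HZ; split; rewrite ?comp1l ?comp0l ?comp0r ?addr0 //.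
by case: (HZ Z) => _; apply.
Qed.

Section Bifunctor.
Variable E : ext_data C.
Hypothesis HEb : E_additive_bifunctor E.

Lemma push1 (X A : obj C) (d : Ext E X A) : push (idm A) d = d.
Proof. by case: HEb => H _ _ _ _; apply: H. Qed.

Lemma pull1 (X A : obj C) (d : Ext E X A) : pull (idm X) d = d.
Proof. by case: HEb => H _ _ _ _; apply: H. Qed.

Lemma Emap_comp (X X' X'' A A' A'' : obj C) (c : hom X' X) (c' : hom X'' X')
    (a : hom A A') (a' : hom A' A'') (d : Ext E X A) :
  Emap E (comp c c') (comp a' a) d = Emap E c' a' (Emap E c a d).
Proof. by case: HEb => _ H _ _ _; apply: H. Qed.

Lemma pushM (X A A' A'' : obj C) (a : hom A A') (a' : hom A' A'') (d : Ext E X A) :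
  push (comp a' a) d = push a' (push a d).
Proof. by rewrite /push -Emap_comp comp1l. Qed.

Lemma pullM (X X' X'' A : obj C) (c : hom X' X) (c' : hom X'' X') (d : Ext E X A) :
  pull (comp c c') d = pull c' (pull c d).
Proof. by rewrite /pull -Emap_comp comp1l. Qed.

Lemma push_pull (X X' A A' : obj C) (c : hom X' X) (a : hom A A') (d : Ext E X A) :
  push a (pull c d) = pull c (push a d).
Proof. by rewrite /push /pull -!Emap_comp !comp1l !comp1r. Qed.

Lemma pushDr (X A A' : obj C) (a : hom A A') (d1 d2 : Ext E X A) :
  push a (d1 + d2) = push a d1 + push a d2.
Proof. by case: HEb => _ _ H _ _; apply: H. Qed.

Lemma pullDr (X X' A : obj C) (c : hom X' X) (d1 d2 : Ext E X A) :
  pull c (d1 + d2) = pull c d1 + pull c d2.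
Proof. by case: HEb => _ _ H _ _; apply: H. Qed.

Lemma pushDl (X A A' : obj C) (a1 a2 : hom A A') (d : Ext E X A) :
  push (a1 + a2) d = push a1 d + push a2 d.
Proof. by case: HEb => _ _ _ _ H; apply: H. Qed.

Lemma pullDl (X X' A : obj C) (c1 c2 : hom X' X) (d : Ext E X A) :
  pull (c1 + c2) d = pull c1 d + pull c2 d.
Proof. by case: HEb => _ _ _ H _; apply: H. Qed.

Lemma push0r (X A A' : obj C) (a : hom A A') : push a (0 : Ext E X A) = 0.
Proof. by apply/(addrI (push a 0)); rewrite -pushDr !addr0. Qed.

Lemma pull0r (X X' A : obj C) (c : hom X' X) : pull c (0 : Ext E X A) = 0.
Proof. by apply/(addrI (pull c 0)); rewrite -pullDr !addr0. Qed.

Lemma push0l (X A A' : obj C) (d : Ext E X A) : push (0 : hom A A') d = 0.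
Proof. by apply/(addrI (push 0 d)); rewrite -pushDl !addr0. Qed.

Lemma pull0l (X X' A : obj C) (d : Ext E X A) : pull (0 : hom X' X) d = 0.
Proof. by apply/(addrI (pull 0 d)); rewrite -pullDl !addr0. Qed.

Lemma pushNl (X A A' : obj C) (a : hom A A') (d : Ext E X A) :
  push (- a) d = - push a d.
Proof. by apply/(addrI (push a d)); rewrite -pushDl !subrr push0l. Qed.

Lemma pullNl (X X' A : obj C) (c : hom X' X) (d : Ext E X A) :
  pull (- c) d = - pull c d.
Proof. by apply/(addrI (pull c d)); rewrite -pullDl !subrr pull0l. Qed.

Lemma pullBl (X X' A : obj C) (c1 c2 : hom X' X) (d : Ext E X A) :
  pull (c1 - c2) d = pull c1 d - pull c2 d.
Proof. by rewrite pullDl pullNl. Qed.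

Lemma strimor_push_pull (X Y : stri E) (p : strihom X Y) : is_strimor p ->
  push (m1 p) (sdel X) = pull (m3 p) (sdel Y).
Proof. by case. Qed.

Lemma strimor_id (X : stri E) : is_strimor (stri_id X).
Proof. by split => /=; rewrite ?comp1l ?comp1r ?push1 ?pull1. Qed.

Lemma strimor_comp (X Y Z : stri E) (q : strihom Y Z) (p : strihom X Y) :
  is_strimor q -> is_strimor p -> is_strimor (stri_comp q p).
Proof.
case=> Hq1 Hq2 Hq3 [Hp1 Hp2 Hp3]; split => /=.
- by rewrite -compA Hp1 compA Hq1 -compA.
- by rewrite -compA Hp2 compA Hq2 -compA.
- by rewrite pushM Hp3 push_pull Hq3 -pullM.
Qed.

Lemma strimor_add (X Y : stri E) (p q : strihom X Y) :
  is_strimor p -> is_strimor q -> is_strimor (stri_add p q).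
Proof.
case=> Hp1 Hp2 Hp3 [Hq1 Hq2 Hq3]; split => /=.
- by rewrite compDl compDr Hp1 Hq1.
- by rewrite compDl compDr Hp2 Hq2.
- by rewrite pushDl pullDl Hp3 Hq3.
Qed.

Lemma strimor_zero (X Y : stri E) : is_strimor (stri_zero X Y).
Proof. by split => /=; rewrite ?comp0l ?comp0r ?push0l ?pull0l. Qed.

Lemma strimor_opp (X Y : stri E) (p : strihom X Y) :
  is_strimor p -> is_strimor (stri_opp p).
Proof.
case=> Hp1 Hp2 Hp3; split => /=.
- by rewrite compNl compNr Hp1.
- by rewrite compNl compNr Hp2.
- by rewrite pushNl pullNl Hp3.
Qed.

Section Extriangulated.
Hypotheses (Hzero : exists Z : obj C, is_zero_object Z)
  (Hbiprod : forall A1 A2 : obj C, exists (S : obj C) (i1 : hom A1 S)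
     (i2 : hom A2 S) (p1 : hom S A1) (p2 : hom S A2), is_biproduct i1 i2 p1 p2)
  (Hclass : realization_is_class E) (Hcond : realization_condition E)
  (Hadd : additive_realization E) (Het3 : ET3 E) (Het3op : ET3op E).

Lemma realization_exists (A X : obj C) (d : Ext E X A) :
  exists (B : obj C) (x : hom A B) (y : hom B X), realizes E d B x y.
Proof. by case: (Hclass d). Qed.

Lemma split_triangle_exists (A X : obj C) :
  exists (S : obj C) (iA : hom A S) (iX : hom X S) (pA : hom S A) (pX : hom S X),
    [/\ realizes E (0 : Ext E X A) S iA pX, comp pA iA = idm A & comp pX iX = idm X].
Proof.
have [S [iA [iX [pA [pX Hb]]]]] := Hbiprod A X.
exists S, iA, iX, pA, pX; split; last by case: Hb.
- exact: Hadd.1 Hb.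
- by case: Hb.
Qed.

Section ExactSequences.
Variables (A X B : obj C) (d : Ext E X A) (x : hom A B) (y : hom B X).
Hypothesis Hd : realizes E d B x y.

Lemma pull_deflation_eq0 : pull y d = 0.
Proof.
have [Z HZ] := Hzero.
have Hs := Hadd.1 _ _ _ _ _ _ _ (biproduct_zero_l B HZ).
have [a [_ <-]] := Het3op Hs Hd (erefl (comp y (idm B))).
exact: push0r.
Qed.

Lemma push_inflation_eq0 : push x d = 0.
Proof.
have [Z HZ] := Hzero.
have Hs := Hadd.1 _ _ _ _ _ _ _ (biproduct_zero_r B HZ).
have [c [_ ->]] := Het3 Hd Hs (erefl (comp (idm B) x)).
exact: pull0r.
Qed.

Lemma pull_eq0_factor_deflation (W : obj C) (w : hom W X) :
  pull w d = 0 -> exists t : hom W B, w = comp y t.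
Proof.
move=> Hw; have [S [iA [iW [pA [pW [Hs _ HpW]]]]]] := split_triangle_exists A W.
have [|b [_ Hb]] := Hcond (a := idm A) (c := w) Hs Hd; first by rewrite Hw push0r.
by exists (comp b iW); rewrite compA Hb -compA HpW comp1r.
Qed.

Lemma push_eq0_factor_inflation (A' : obj C) (a : hom A A') :
  push a d = 0 -> exists s : hom B A', a = comp s x.
Proof.
move=> Ha; have [S [iA [iX [pA [pX [Hs HpA _]]]]]] := split_triangle_exists A' X.
have [|b [Hb _]] := Hcond (a := a) (c := idm X) Hd Hs; first by rewrite Ha pull0r.
by exists (comp pA b); rewrite -compA Hb compA HpA comp1l.
Qed.

Lemma push_inflation_eq0_pull (W : obj C) (th : Ext E W A) :
  push x th = 0 -> exists w : hom W X, th = pull w d.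
Proof.
move=> Ht; have [V [u [v Hv]]] := realization_exists th.
have [S [iB [iW [pB [pW [Hs HpB _]]]]]] := split_triangle_exists B W.
have [|b [Hb _]] := Hcond (a := x) (c := idm W) Hv Hs; first by rewrite Ht pull0r.
have Hbu : comp (comp pB b) u = comp x (idm A).
  by rewrite -compA Hb compA HpB comp1l comp1r.
have [c [_ Hc]] := Het3 Hv Hd Hbu.
by exists c; rewrite -Hc push1.
Qed.

Lemma pull_deflation_eq0_push (A' : obj C) (th : Ext E X A') :
  pull y th = 0 -> exists a : hom A A', th = push a d.
Proof.
move=> Ht; have [V [u [v Hv]]] := realization_exists th.
have [S [iA [iB [pA [pB [Hs _ HpB]]]]]] := split_triangle_exists A' B.
have [|b [_ Hb]] := Hcond (a := idm A') (c := y) Hs Hv; first by rewrite Ht push0r.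
have Hvb : comp v (comp b iB) = comp (idm X) y.
  by rewrite compA Hb -compA HpB comp1l comp1r.
have [a [_ Ha]] := Het3op Hd Hv Hvb.
by exists a; rewrite Ha pull1.
Qed.

End ExactSequences.

Lemma stri_eqR2P (X Y : stri E) (p q : strihom X Y) :
  stri_eqR2 p q <-> pull (m3 p) (sdel Y) = pull (m3 q) (sdel Y).
Proof.
split.
  case=> t /= Ht; apply/eqP; rewrite -subr_eq0 -pullBl Ht pullM.
  by rewrite (pull_deflation_eq0 (sreal Y)) pull0r.
move=> H; apply: (pull_eq0_factor_deflation (sreal Y)).
by rewrite pullBl H subrr.
Qed.

Lemma stri_eqR2_m3 (X Y : stri E) (p q : strihom X Y) :
  m3 p = m3 q -> stri_eqR2 p q.
Proof. by move=> H; apply/stri_eqR2P; rewrite H. Qed.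

Lemma stri_eqR2_pushP (X Y : stri E) (p q : strihom X Y) :
  is_strimor p -> is_strimor q ->
  stri_eqR2 p q <-> push (m1 p) (sdel X) = push (m1 q) (sdel X).
Proof.
by move=> Hp Hq; rewrite !strimor_push_pull //; apply: stri_eqR2P.
Qed.

Lemma strimor_of_ends (X Y : stri E) (a : hom (s1 X) (s1 Y)) (c : hom (s3 X) (s3 Y)) :
  push a (sdel X) = pull c (sdel Y) ->
  exists p : strihom X Y, [/\ is_strimor p, m1 p = a & m3 p = c].
Proof.
move=> H; have [b [Hb1 Hb2]] := Hcond (sreal X) (sreal Y) H.
by exists (SHom a b c).
Qed.

Lemma stri_eqR2_comp (X Y Z : stri E) (q q' : strihom Y Z) (p p' : strihom X Y) :
  is_strimor q -> stri_eqR2 q q' -> stri_eqR2 p p' ->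
  stri_eqR2 (stri_comp q p) (stri_comp q' p').
Proof.
move=> Hq /stri_eqR2P Eq /stri_eqR2P Ep; apply/stri_eqR2P => /=.
by rewrite !pullM -Eq -(strimor_push_pull Hq) -!push_pull Ep.
Qed.

Lemma stri_quot_well_formed : pwell_formed (stri_quot E).
Proof.
split => /=.
- split=> [X Y f|X Y f g /stri_eqR2P H|X Y f g h /stri_eqR2P H1 /stri_eqR2P H2].
  + exact: stri_eqR2_m3.
  + exact/stri_eqR2P.
  + by apply/stri_eqR2P; rewrite H1.
- split; [exact: strimor_id | exact: strimor_comp | exact: strimor_add
         | exact: strimor_zero | exact: strimor_opp].
- split=> [X Y Z g g' f f' Hg _ _ _|X Y f f' g g' _ _ _ _|X Y f f' _ _].
  + exact: stri_eqR2_comp.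
  + by move=> /stri_eqR2P H1 /stri_eqR2P H2; apply/stri_eqR2P; rewrite /= !pullDl H1 H2.
  + by move=> /stri_eqR2P H; apply/stri_eqR2P; rewrite /= !pullNl H.
- by split=> * /=; apply: stri_eqR2_m3; rewrite /= ?compA ?comp1l ?comp1r.
- split=> [*|*|*|*|]; try by apply: stri_eqR2_m3; rewrite /= ?addrA ?add0r ?addNr // addrC.
  by split=> * /=; apply: stri_eqR2_m3; rewrite /= ?compDl ?compDr.
Qed.

Lemma stri_zero_object : exists Z : stri E, pzero_object (K := stri_quot E) Z.
Proof.
have [Z HZ] := Hzero; have [B [x [y Hr]]] := realization_exists (0 : Ext E Z Z).
exists (STri Hr) => T; split => f g _ _; apply: stri_eqR2_m3.
- by case: (HZ (s3 T)) => + _; apply.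
- by case: (HZ (s3 T)) => _; apply.
Qed.

Lemma stri_biproduct_exists (X1 X2 : stri E) :
  exists (S : stri E) (i1 : strihom X1 S) (i2 : strihom X2 S)
    (p1 : strihom S X1) (p2 : strihom S X2), pbiproduct (K := stri_quot E) i1 i2 p1 p2.
Proof.
have [SA [iA1 [iA2 [pA1 [pA2 [HA1 HA2 HA3 HA4 _]]]]]] := Hbiprod (s1 X1) (s1 X2).
have [SC [iC1 [iC2 [pC1 [pC2 [HC1 HC2 HC3 HC4 HC5]]]]]] := Hbiprod (s3 X1) (s3 X2).
set dS := push iA1 (pull pC1 (sdel X1)) + push iA2 (pull pC2 (sdel X2)).
have [B [x [y Hr]]] := realization_exists dS.
have [|i1 [Hi1 _ Fi1]] := @strimor_of_ends X1 (STri Hr) iA1 iC1.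
  by rewrite /= /dS pullDr -!push_pull -!pullM HC1 HC4 pull0l push0r addr0 pull1.
have [|i2 [Hi2 _ Fi2]] := @strimor_of_ends X2 (STri Hr) iA2 iC2.
  by rewrite /= /dS pullDr -!push_pull -!pullM HC2 HC3 pull0l push0r add0r pull1.
have [|p1 [Hp1 _ Fp1]] := @strimor_of_ends (STri Hr) X1 pA1 pC1.
  by rewrite /= /dS pushDr -!pushM HA1 HA3 push0l addr0 push1.
have [|p2 [Hp2 _ Fp2]] := @strimor_of_ends (STri Hr) X2 pA2 pC2.
  by rewrite /= /dS pushDr -!pushM HA2 HA4 push0l add0r push1.
exists (STri Hr), i1, i2, p1, p2.
by split=> //=; try split; apply: stri_eqR2_m3; rewrite /= ?Fi1 ?Fi2 ?Fp1 ?Fp2.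
Qed.

Section KernelCokernel.
Variables (X Y : stri E) (f : strihom X Y).
Hypothesis Hf : is_strimor f.

Lemma stri_mono_push_pull_eq0 (W : obj C) (c : hom W (s3 X)) :
  pmono (K := stri_quot E) f ->
  push (m1 f) (pull c (sdel X)) = 0 -> pull c (sdel X) = 0.
Proof.
move=> Hmono Hfc; have [R [xr [yr Hr]]] := realization_exists (pull c (sdel X)).
have [h [Hh Eh _]] := @strimor_of_ends (STri Hr) X (idm _) c (push1 _).
have /(stri_eqR2_pushP Hh (strimor_zero _ _)) : stri_eqR2 h (stri_zero _ X).
  apply: Hmono (Hh) (strimor_zero _ _) _.
  apply/(stri_eqR2_pushP (strimor_comp Hf Hh) (strimor_comp Hf (strimor_zero _ _))).
  by rewrite /= Eh comp1r comp0r push0l.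
by rewrite /= Eh push1 push0l.
Qed.

Lemma stri_epi_pull_push_eq0 (A' : obj C) (a : hom (s1 Y) A') :
  pepi (K := stri_quot E) f ->
  pull (m3 f) (push a (sdel Y)) = 0 -> push a (sdel Y) = 0.
Proof.
move=> Hepi Haf; have [R [xr [yr Hr]]] := realization_exists (push a (sdel Y)).
have [h [Hh _ Fh]] := @strimor_of_ends Y (STri Hr) a (idm _) (esym (pull1 _)).
have /stri_eqR2P : stri_eqR2 h (stri_zero Y (STri Hr)).
  apply: Hepi (Hh) (strimor_zero _ _) _.
  by apply/stri_eqR2P; rewrite /= Fh comp1l comp0l pull0l.
by rewrite /= Fh pull1 pull0l.
Qed.

Variables (M : obj C) (e : hom (s1 Y) M) (p : hom M (s3 X)).
Hypothesis Hep : realizes E (pull (m3 f) (sdel Y)) M e p.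

Variables (BK : obj C) (xk : hom (s1 X) BK) (yk : hom BK M).
Hypothesis HK : realizes E (pull p (sdel X)) BK xk yk.
Variable k : strihom (STri HK) X.
Hypotheses (Hk : is_strimor k) (Hk1 : m1 k = idm _) (Hk3 : m3 k = p).

Variables (BQ : obj C) (xq : hom M BQ) (yq : hom BQ (s3 Y)).
Hypothesis HQ : realizes E (push e (sdel Y)) BQ xq yq.
Variable q : strihom Y (STri HQ).
Hypotheses (Hq : is_strimor q) (Hq1 : m1 q = e) (Hq3 : m3 q = idm _).

Lemma stri_kernel : pkernel (K := stri_quot E) f k.
Proof.
split=> //=.
  by apply/stri_eqR2P; rewrite /= Hk3 pullM pull0l (pull_deflation_eq0 Hep).
move=> T g Hg /stri_eqR2P /=; rewrite pullM pull0l => Hfg.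
have [s Hs] := pull_eq0_factor_deflation Hep Hfg.
have [|u [Hu Eu Fu]] := @strimor_of_ends T (STri HK) (m1 g) s.
  by rewrite /= -pullM -Hs (strimor_push_pull Hg).
exists u; split=> //; first by apply: stri_eqR2_m3; rewrite /= Hk3 Fu Hs.
move=> u' Hu' /(stri_eqR2_pushP (strimor_comp Hk Hu') Hg) /=.
rewrite Hk1 comp1l => Eu'; apply/(stri_eqR2_pushP Hu' Hu).
by rewrite Eu' Eu.
Qed.

Lemma stri_cokernel : pcokernel (K := stri_quot E) f q.
Proof.
split=> //=.
  apply/(stri_eqR2_pushP (strimor_comp Hq Hf) (strimor_zero _ _)) => /=.
  by rewrite Hq1 pushM (strimor_push_pull Hf) (push_inflation_eq0 Hep) push0l.
move=> T g Hg /(stri_eqR2_pushP (strimor_comp Hg Hf) (strimor_zero _ _)) /=.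
rewrite pushM (strimor_push_pull Hf) push0l => Hgf.
have [s Hs] := push_eq0_factor_inflation Hep Hgf.
have [|u [Hu Eu Fu]] := @strimor_of_ends (STri HQ) T s (m3 g).
  by rewrite /= -pushM -Hs (strimor_push_pull Hg).
exists u; split=> //; first by apply: stri_eqR2_m3; rewrite /= Hq3 Fu comp1r.
move=> u' Hu' /stri_eqR2P /=; rewrite Hq3 comp1r => Eu'.
by apply/stri_eqR2P; rewrite Eu' Fu.
Qed.

Lemma stri_mono_kernel : pmono (K := stri_quot E) f -> pkernel (K := stri_quot E) q f.
Proof.
move=> Hmono; split=> //=; first by case: stri_cokernel.
move=> T g Hg /(stri_eqR2_pushP (strimor_comp Hq Hg) (strimor_zero _ _)) /=.
rewrite Hq1 pushM (strimor_push_pull Hg) push0l => Hqg.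
have [v Hv] := push_inflation_eq0_pull Hep Hqg.
have Hfv : push (m1 f) (pull (comp v (sf2 T)) (sdel X)) = 0.
  rewrite push_pull (strimor_push_pull Hf) pullM -Hv -(strimor_push_pull Hg).
  by rewrite -push_pull (pull_deflation_eq0 (sreal T)) push0r.
have := stri_mono_push_pull_eq0 Hmono Hfv; rewrite pullM => Hv0.
have [a Ha] := pull_deflation_eq0_push (sreal T) Hv0.
have [u [Hu _ Fu]] := @strimor_of_ends T X a v (esym Ha).
have Hfu : stri_eqR2 (stri_comp f u) g.
  by apply/stri_eqR2P; rewrite /= Fu pullM -Hv.
exists u; split=> // u' Hu' /stri_eqR2P Hfu'.
by apply: Hmono Hu' Hu _; apply/stri_eqR2P; rewrite Hfu'; apply/esym/stri_eqR2P.
Qed.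

Lemma stri_epi_cokernel : pepi (K := stri_quot E) f -> pcokernel (K := stri_quot E) k f.
Proof.
move=> Hepi; split=> //=; first by case: stri_kernel.
have HeY : push e (sdel Y) = 0.
  apply: stri_epi_pull_push_eq0 Hepi _.
  by rewrite -push_pull (push_inflation_eq0 Hep).
have [v Hv] := push_inflation_eq0_pull Hep HeY.
move=> T g Hg /(stri_eqR2_pushP (strimor_comp Hg Hk) (strimor_zero _ _)) /=.
rewrite Hk1 comp1r push0l push_pull (strimor_push_pull Hg) -pullM => Hgp.
have [|s Hs] := pull_eq0_factor_deflation (w := comp v (sf2 Y)) Hep.
  by rewrite pullM -Hv (pull_deflation_eq0 (sreal Y)).
have [|a Ha] := pull_deflation_eq0_push (th := pull (comp (m3 g) v) (sdel T)) (sreal Y).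
  by rewrite -pullM -compA Hs compA pullM Hgp pull0r.
have [u [Hu _ Fu]] := @strimor_of_ends Y T a (comp (m3 g) v) (esym Ha).
have [|s' Hs'] := pull_eq0_factor_deflation (w := comp v (m3 f) - idm _) Hep.
  by rewrite pullBl pullM -Hv pull1 subrr.
have Hfu : stri_eqR2 (stri_comp u f) g.
  apply/stri_eqR2P; rewrite /= Fu -compA.
  have -> : comp v (m3 f) = comp p s' + idm _ by rewrite -Hs' subrK.
  by rewrite compDr comp1r pullDl compA pullM Hgp pull0r add0r.
exists u; split=> // u' Hu' /stri_eqR2P Hu'f.
by apply: Hepi Hu' Hu _; apply/stri_eqR2P; rewrite Hu'f; apply/esym/stri_eqR2P.
Qed.

End KernelCokernel.

Lemma stri_kernel_cokernel_exist (X Y : stri E) (f : strihom X Y) : is_strimor f ->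
  exists (K : stri E) (k : strihom K X) (Q : stri E) (q : strihom Y Q),
    [/\ pkernel (K := stri_quot E) f k, pcokernel (K := stri_quot E) f q,
        pmono (K := stri_quot E) f -> pkernel (K := stri_quot E) q f
      & pepi (K := stri_quot E) f -> pcokernel (K := stri_quot E) k f].
Proof.
move=> Hf; have [M [e [p Hep]]] := realization_exists (pull (m3 f) (sdel Y)).
have [BK [xk [yk HK]]] := realization_exists (pull p (sdel X)).
have [k [Hk Hk1 Hk3]] := @strimor_of_ends (STri HK) X (idm _) p (push1 _).
have [BQ [xq [yq HQ]]] := realization_exists (push e (sdel Y)).
have [q [Hq Hq1 Hq3]] := @strimor_of_ends Y (STri HQ) e (idm _) (esym (pull1 _)).
exists (STri HK), k, (STri HQ), q; split.
- exact: (stri_kernel Hep Hk Hk1 Hk3).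
- exact: (stri_cokernel Hf Hep Hq Hq1 Hq3).
- exact: (stri_mono_kernel Hf Hep Hq Hq1 Hq3).
- exact: (stri_epi_cokernel Hf Hep Hk Hk1 Hk3).
Qed.

Lemma stri_quot_abelian : is_abelian (stri_quot E).
Proof.
split.
- exact: stri_quot_well_formed.
- exact: stri_zero_object.
- split; first exact: stri_biproduct_exists.
  + move=> X Y f /stri_kernel_cokernel_exist[K [k [_ [_ [Hk _ _ _]]]]].
    by exists K, k.
  + move=> X Y f /stri_kernel_cokernel_exist[_ [_ [Q [q [_ Hq _ _]]]]].
    by exists Q, q.
- move=> X Y f Hf Hmono.
  have [_ [_ [Q [q [_ Hq Hker _]]]]] := stri_kernel_cokernel_exist Hf.
  by exists Q, q; split; [case: Hq | exact: Hker].
- move=> X Y f Hf Hepi.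
  have [K [k [_ [_ [Hk _ _ Hcok]]]]] := stri_kernel_cokernel_exist Hf.
  by exists K, k; split; [case: Hk | exact: Hcok].
Qed.

End Extriangulated.
End Bifunctor.
End Preadditive.

Theorem proposition4p3 (C : preadd) (E : ext_data C) :
  extriangulated E -> is_abelian (stri_quot E).
Proof.
case=> [[HC Hzero Hbiprod] HEb [Hclass [Hcond Hadd]] [Het3 Het3op] _].
exact: stri_quot_abelian.
Qed.
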